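(* Let $G$ be a finite abelian group, $M$ a finitely generated $\mathbb Z[G]$-module, $H\subseteq G$ a subgroup and $s\ge0$. Then there is an isomorphism of $\mathbb Z[G/H]$-modules \[ \textstyle\bigcap^s_{\mathbb Z[G/H]}(M^{**})^H\xrightarrow{\ \sim\ }\big(\bigcap^s_{\mathbb Z[G]}M\big)^H \] whose base change to $\mathbb Q$ is the map $\nu_H:\mathbb Q\otimes\bigwedge^s_{\mathbb Z[G/H]}M^H\to\mathbb Q\otimes\bigwedge^s_{\mathbb Z[G]}M$ given by $x_1\wedge\cdots\wedge x_s\mapsto|H|^{1-s}x_1\wedge\cdots\wedge x_s$ for $s\ge1$ (equivalently, $\mathrm N_Ha_1\wedge\cdots\wedge\mathrm N_Ha_s\mapsto\mathrm N_H\cdot(a_1\wedge\cdots\wedge a_s)$) and by multiplication by $\mathrm N_H$ for $s=0$.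
   Context: For a commutative ring $R$ and $R$-module $N$, $N^*=\mathrm{Hom}_R(N,R)$ and the $s$-th exterior bidual is $\bigcap^s_RN=(\bigwedge^s_RN^* )^*$. Here $R=\mathbb Z[G]$ or $\mathbb Z[G/H]$; $(M^{**})^H$ is regarded as a $\mathbb Z[G/H]$-module. $\mathrm N_H=\sum_{h\in H}h$. After tensoring with $\mathbb Q$, $\mathbb Q\otimes\bigcap^s_RN$ is identified with $\bigwedge^s_{\mathbb Q\otimes R}(\mathbb Q\otimes N)$ (the group algebras being semisimple), and $\mathbb Q\otimes(M^{**})^H=(\mathbb Q\otimes M)^H$. *)

From HB Require Import structures.
From mathcomp Require Import all_boot all_order all_algebra all_fingroup.
From mathcomp Require Import boolp classical_sets functions.
Set Implicit Arguments. Unset Strict Implicit. Unset Printing Implicit Defensive.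
Import GRing.Theory.
Local Open Scope ring_scope.

(* The integral group ring Z[T] of a finite group T: finitely supported
   (here: all) functions T -> int, with convolution product. *)
Notation ZG T := {ffun T -> int}.

Definition gone (T : finGroupType) : ZG T := [ffun x => ((x == 1%g) : nat)%:Z].

Definition gmul (T : finGroupType) (a b : ZG T) : ZG T :=
  [ffun x => \sum_(h : T) a h * b (h^-1 * x)%g].

(* multiplication by the basis element g of Z[T] *)
Definition gtrans (T : finGroupType) (g : T) (a : ZG T) : ZG T :=
  [ffun x => a (g^-1 * x)%g].

Definition NHel (T : finGroupType) (H : {set T}) : ZG T :=
  [ffun x => ((x \in H) : nat)%:Z].

Definition gscale (T : finGroupType) (X : zmodType) (act : T -> X -> X)
  (r : ZG T) (x : X) : X := \sum_(g : T) act g x *~ r g.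

(* A Z[T]-module is a zmodType X (or a subset S of it, closed under the
   operations) with a left action act of T by additive maps. *)
Definition fin_gen (T : finGroupType) (X : zmodType) (act : T -> X -> X) :=
  exists gens : seq X, forall x : X,
    exists r : 'I_(size gens) -> ZG T,
      x = \sum_(i < size gens) gscale act (r i) gens`_i.

Definition ZGlin_on (T : finGroupType) (X : zmodType) (act : T -> X -> X)
  (S : X -> Prop) (f : X -> ZG T) :=
  (forall x y, S x -> S y -> f (x + y) = f x + f y) /\
  (forall g x, S x -> f (act g x) = gtrans g (f x)).

(* The dual S^* = Hom_{Z[T]}(S, Z[T]); its elements are represented by
   functions on X vanishing outside S (so Leibniz equality is the right one). *)
Definition dual (T : finGroupType) (X : zmodType) (act : T -> X -> X)
  (S : X -> Prop) : (X -> ZG T) -> Prop :=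
  fun f => ZGlin_on act S f /\ (forall x, ~ S x -> f x = 0).

Definition dual_act (T : finGroupType) (X : Type) (g : T) (f : X -> ZG T)
  : X -> ZG T := fun x => gtrans g (f x).

Definition upd (s : nat) (A : Type) (fs : 'I_s -> A) (i : 'I_s) (a : A) : 'I_s -> A :=
  fun j => if j == i then a else fs j.

(* The s-th exterior bidual  (wedge^s S^* )^* = Hom_{Z[T]}(wedge^s S^*, Z[T]),
   i.e. the alternating Z[T]-multilinear maps (S^* )^s -> Z[T]
   (universal property of the exterior power), represented by functions on
   tuples of X -> Z[T] vanishing outside (S^* )^s. *)
Definition ext_bidual (T : finGroupType) (X : zmodType) (act : T -> X -> X)
  (S : X -> Prop) (s : nat) : (('I_s -> (X -> ZG T)) -> ZG T) -> Prop :=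
  fun F =>
  (forall (fs : 'I_s -> X -> ZG T) (i : 'I_s) (f f' : X -> ZG T),
     (forall k, dual act S (fs k)) -> dual act S f -> dual act S f' ->
     F (upd fs i (f + f')) = F (upd fs i f) + F (upd fs i f')) /\
  (forall (fs : 'I_s -> X -> ZG T) (i : 'I_s) (g : T),
     (forall k, dual act S (fs k)) ->
     F (upd fs i (dual_act g (fs i))) = gtrans g (F fs)) /\
  (forall (fs : 'I_s -> X -> ZG T) (i j : 'I_s),
     (forall k, dual act S (fs k)) -> i != j -> fs i = fs j -> F fs = 0) /\
  (forall (fs : 'I_s -> X -> ZG T), ~ (forall k, dual act S (fs k)) -> F fs = 0).

Definition bid_act (T : finGroupType) (A : Type) (g : T) (F : A -> ZG T)
  : A -> ZG T := fun fs => gtrans g (F fs).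

Definition gdet (T : finGroupType) (s : nat) (A : 'I_s -> 'I_s -> ZG T) : ZG T :=
  \sum_(p : 'S_s)
     (if odd_perm p then - \big[@gmul T/gone T]_(i < s) A i (p i)
      else \big[@gmul T/gone T]_(i < s) A i (p i)).

(* canonical map  wedge^s S -> bidual:  y_1 /\ ... /\ y_s  |->
   ((f_1,...,f_s) |-> det (f_i (y_j))) *)
Definition xi (T : finGroupType) (X : zmodType) (act : T -> X -> X)
  (S : X -> Prop) (s : nat) (y : 'I_s -> X) : ('I_s -> (X -> ZG T)) -> ZG T :=
  fun fs => if `[< forall k, dual act S (fs k) >]
            then gdet (fun i j => fs i (y j)) else 0.

Definition invar (T : finGroupType) (X : Type) (act : T -> X -> X)
  (S : X -> Prop) (H : {set T}) : X -> Prop :=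
  fun x => S x /\ (forall h, h \in H -> act h x = x).

Definition normH (T : finGroupType) (X : zmodType) (act : T -> X -> X)
  (H : {set T}) (x : X) : X := \sum_(h in H) act h x.

Definition bidual_set (T : finGroupType) (X : zmodType) (act : T -> X -> X)
  : ((X -> ZG T) -> ZG T) -> Prop :=
  dual (@dual_act T X) (dual act (fun _ => True)).

Definition evb (T : finGroupType) (X : zmodType) (act : T -> X -> X) (x : X)
  : (X -> ZG T) -> ZG T :=
  fun f => if `[< dual act (fun _ => True) f >] then f x else 0.

(* action of G/H (= coset_of H) on an H-invariant element via a representative *)
Definition cqact (gT : finGroupType) (H : {group gT}) (A : Type)
  (act : gT -> A -> A) (c : coset_of H) (a : A) : A :=
  act (repr (c : {set gT})) a.

Definition ZGiso (T : finGroupType) (X Y : zmodType)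
  (actX : T -> X -> X) (SX : X -> Prop) (actY : T -> Y -> Y) (SY : Y -> Prop)
  (Phi : X -> Y) :=
  (forall x, SX x -> SY (Phi x)) /\
  (forall x y, SX x -> SX y -> Phi (x + y) = Phi x + Phi y) /\
  (forall g x, SX x -> Phi (actX g x) = actY g (Phi x)) /\
  (forall x y, SX x -> SX y -> Phi x = Phi y -> x = y) /\
  (forall y, SY y -> exists2 x, SX x & Phi x = y).

Arguments ext_bidual {T X} act S s _.

From HB Require Import structures.
From mathcomp Require Import all_boot all_order all_algebra all_fingroup.
From mathcomp Require Import boolp classical_sets functions.
From mathcomp Require Import zify.
Import GRing.Theory Num.Theory.
Local Open Scope ring_scope.
Set Implicit Arguments. Unset Strict Implicit. Unset Printing Implicit Defensive.

(* Write M^{*} for the Z[G]-dual of M and V := (M^{**})^H.  Each f in M^{*}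
   defines a Z[G/H]-linear form  evalH f : phi |-> phi(f)  on V, the value
   phi(f) being H-invariant, i.e. an element of Z[G/H].  The isomorphism sends
   an alternating form F on (V^{*})^s to  (f_1, ..., f_s) |-> F(evalH f_1, ...,
   evalH f_s),  read in Z[G] through the inclusion Z[G/H] = Z[G]^H.
   - Injectivity: M^{*} and V are lattices, so a rational solution of a linear
     system shows that a positive multiple of every e in V^{*} is some evalH f;
     since Z[G/H] is torsion-free, F is determined by its values on tuples
     (evalH f_1, ..., evalH f_s).
   - Surjectivity: an H-invariant alternating form Psi on (M^{*})^s extends to
     (V^{*})^s by iterated evaluation
       F(e_1, ..., e_s) = e_s(f_s |-> ... e_1(f_1 |-> Psi(f_1, ..., f_s)) ...),
     each inner expression being, as a function of its free argument, an
     element of V; F is alternating because, after scaling every e_i into the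
     image of evalH, it becomes Psi.
   - On xi(ev(N_H a_1), ..., ev(N_H a_s)): evalH f (ev(N_H a)) is the image of
     f(a) under the ring map Z[G] -> Z[G/H], which commutes with determinants,
     and inflating that image back to Z[G] multiplies by N_H. *)

Definition zmod_closedP (V : zmodType) (S : V -> Prop) :=
  S 0 /\ forall x y, S x -> S y -> S (x - y).

Definition additive_on (V W : zmodType) (S : V -> Prop) (f : V -> W) :=
  forall x y, S x -> S y -> f (x + y) = f x + f y.

Section ClosedPredicates.
Variables (V : zmodType) (S : V -> Prop).
Hypothesis S_closed : zmod_closedP S.

Lemma cpred0 : S 0.
Proof. by case: S_closed. Qed.

Lemma cpredB x y : S x -> S y -> S (x - y).
Proof. by case: S_closed => _; apply. Qed.

Lemma cpredN x : S x -> S (- x).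
Proof. by move=> Sx; rewrite -sub0r; apply: cpredB => //; apply: cpred0. Qed.

Lemma cpredD x y : S x -> S y -> S (x + y).
Proof. by move=> Sx Sy; rewrite -[y]opprK; apply: cpredB => //; apply: cpredN. Qed.

Lemma cpred_sum (J : Type) (r : seq J) (Q : pred J) (F : J -> V) :
  (forall i, Q i -> S (F i)) -> S (\sum_(i <- r | Q i) F i).
Proof.
by move=> SF; elim/big_rec: _ => [|i x Qi Sx]; [apply: cpred0 | apply: cpredD; auto].
Qed.

Lemma cpredMn x n : S x -> S (x *+ n).
Proof.
by move=> Sx; elim: n => [|n IH]; rewrite ?mulr0n ?mulrS; [apply: cpred0 | apply: cpredD].
Qed.

Lemma cpredMz x z : S x -> S (x *~ z).
Proof. by move=> Sx; case: z => n; rewrite ?NegzE ?mulrNz; [|apply: cpredN]; apply: cpredMn. Qed.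

Variables (W : zmodType) (f : V -> W).
Hypothesis fD : additive_on S f.

Lemma additive_on0 : f 0 = 0.
Proof. by apply: (addrI (f 0)); rewrite -fD ?addr0 //; apply: cpred0. Qed.

Lemma additive_onN x : S x -> f (- x) = - f x.
Proof.
move=> Sx; apply/eqP; rewrite -addr_eq0 -fD ?addNr ?additive_on0 //.
exact: cpredN.
Qed.

Lemma additive_onB x y : S x -> S y -> f (x - y) = f x - f y.
Proof. by move=> Sx Sy; rewrite fD ?additive_onN //; apply: cpredN. Qed.

Lemma additive_on_sum (J : Type) (r : seq J) (Q : pred J) (F : J -> V) :
  (forall i, Q i -> S (F i)) -> f (\sum_(i <- r | Q i) F i) = \sum_(i <- r | Q i) f (F i).
Proof.
move=> SF; elim: r => [|i r IH]; first by rewrite !big_nil additive_on0.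
rewrite !big_cons; case: ifP => Qi //.
by rewrite fD ?IH //; [apply: SF | apply: cpred_sum].
Qed.

Lemma additive_onMn x n : S x -> f (x *+ n) = f x *+ n.
Proof.
move=> Sx; elim: n => [|n IH]; first by rewrite !mulr0n additive_on0.
by rewrite !mulrS fD ?IH //; apply: cpredMn.
Qed.

Lemma additive_onMz x z : S x -> f (x *~ z) = f x *~ z.
Proof.
move=> Sx; case: z => n; rewrite ?NegzE ?mulrNz ?additive_onN ?additive_onMn //.
exact: cpredMn.
Qed.

Lemma additive_on_zcomb (J : finType) (bs : J -> V) (z : J -> int) :
  (forall l, S (bs l)) -> f (\sum_l bs l *~ z l) = \sum_l f (bs l) *~ z l.
Proof.
move=> Sbs; rewrite additive_on_sum => [|l _]; last exact: cpredMz.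
by apply: eq_bigr => l _; rewrite additive_onMz.
Qed.

End ClosedPredicates.

Lemma zmod_closedT (V : zmodType) : zmod_closedP (fun _ : V => True).
Proof. by []. Qed.

Lemma additive_on_span_eqMn (V W : zmodType) (S : V -> Prop) (L1 L2 : V -> W)
    (J : finType) (bs : J -> V) (z : J -> int) v c :
  zmod_closedP S -> additive_on S L1 -> additive_on S L2 -> (forall l, S (bs l)) ->
  S v -> v *+ c = \sum_l bs l *~ z l -> (forall l, L1 (bs l) = L2 (bs l)) ->
  L1 v *+ c = L2 v *+ c.
Proof.
move=> S_closed L1D L2D Sbs Sv vE L12.
rewrite -(additive_onMn S_closed L1D) // -(additive_onMn S_closed L2D) // vE.
rewrite !(additive_on_zcomb S_closed) //.
by apply: eq_bigr => l _; rewrite L12.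
Qed.

Lemma rat_common_denom (J : finType) (a : J -> rat) :
  exists c : nat, exists z : J -> int, (0 < c)%N /\ forall j, a j * c%:R = (z j)%:~R.
Proof.
exists (\prod_j `|denq (a j)|%N).
exists (fun j => numq (a j) * (\prod_(i | i != j) `|denq (a i)|%N)%:Z); split.
  by rewrite prodn_gt0 // => j; rewrite absz_gt0 denq_eq0.
move=> j; rewrite (bigD1 j) //= natrM.
have -> : (`|denq (a j)|%N)%:R = (denq (a j))%:~R :> rat by rewrite -absz_denq.
by rewrite mulrA -numqE rmorphM.
Qed.

Section RationalLattice.
Variables (V : Type) (P : V -> Prop) (I : finType) (co : V -> I -> int).

Definition coord_row (v : V) : 'rV[rat]_#|I| := \row_k (co v (enum_val k))%:~R.

Definition coord_mx t (bs : 'I_t -> V) : 'M[rat]_(t, #|I|) :=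
  \matrix_(l, k) (co (bs l) (enum_val k))%:~R.

Definition snoc_family t (bs : 'I_t -> V) (v : V) : 'I_(t + 1) -> V :=
  fun l => match fintype.split l with inl l' => bs l' | inr _ => v end.

Lemma coord_mx_snoc t (bs : 'I_t -> V) v :
  coord_mx (snoc_family bs v) = col_mx (coord_mx bs) (coord_row v).
Proof.
apply/matrixP => i j; rewrite -(splitK i) /snoc_family.
case: (fintype.split i) => k /=.
  by rewrite col_mxEu !mxE (unsplitK (inl _ k)).
by rewrite col_mxEd !mxE (unsplitK (inr _ k)).
Qed.

Lemma row_free_snoc t (bs : 'I_t -> V) v :
  row_free (coord_mx bs) -> ~~ (coord_row v <= coord_mx bs)%MS ->
  row_free (coord_mx (snoc_family bs v)).
Proof.
move=> free_bs notin; rewrite coord_mx_snoc /row_free; apply/eqP/anti_leq.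
rewrite rank_leq_row /= -addsmxE.
have [_ eq_rank] := mxrank_leqif_sup (addsmxSl (coord_mx bs) (coord_row v)).
have : (\rank (coord_mx bs) < \rank (coord_mx bs + coord_row v))%N.
  rewrite ltn_neqAle mxrankS ?addsmxSl // andbT eq_rank.
  by apply: contra notin => sub; apply: submx_trans (addsmxSr _ _) sub.
by rewrite (eqP free_bs) addn1.
Qed.

Lemma rational_basis : exists t (bs : 'I_t -> V),
  [/\ forall l, P (bs l), row_free (coord_mx bs) &
      forall v, P v -> (coord_row v <= coord_mx bs)%MS].
Proof.
suff grow n t (bs : 'I_t -> V) : (#|I| - t < n)%N -> (forall l, P (bs l)) ->
    row_free (coord_mx bs) -> exists t' (bs' : 'I_t' -> V),
  [/\ forall l, P (bs' l), row_free (coord_mx bs') &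
      forall v, P v -> (coord_row v <= coord_mx bs')%MS].
  apply: (@grow #|I|.+1 0 (fun l => match l with Ordinal _ p => False_rect _ (notF p) end)).
  - by rewrite subn0.
  - by case.
  - by rewrite /row_free -leqn0 rank_leq_row.
elim: n t bs => // n IH t bs lt_n Pbs free_bs.
have [all_in|] := pselect (forall v, P v -> (coord_row v <= coord_mx bs)%MS).
  by exists t, bs.
move=> /existsNP[v /not_implyP[Pv notin]].
have free' := row_free_snoc free_bs (introN idP notin).
apply: (IH _ _ _ _ free'); last by move=> l; rewrite /snoc_family; case: fintype.split.
have := rank_leq_col (coord_mx (snoc_family bs v)).
by rewrite (eqP free') addn1; move: lt_n; lia.
Qed.

Lemma coord_row_int_comb t (bs : 'I_t -> V) v : (coord_row v <= coord_mx bs)%MS ->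
  exists c : nat, exists z : 'I_t -> int,
    (0 < c)%N /\ forall i, co v i *+ c = \sum_l z l * co (bs l) i.
Proof.
move=> /submxP[D eD]; have [c [z [c_gt0 zE]]] := rat_common_denom (fun l => D 0 l).
exists c, z; split => // i; apply: (@intr_inj rat); rewrite rmorphMn rmorph_sum /=.
have := congr1 (fun M : 'rV[rat]_#|I| => M 0 (enum_rank i)) eD.
rewrite mxE enum_rankK => ->; rewrite mxE -mulr_natr mulr_suml.
by apply: eq_bigr => l _; rewrite mxE enum_rankK mulrAC zE rmorphM.
Qed.

Lemma row_free_int_solve t (bs : 'I_t -> V) : row_free (coord_mx bs) ->
  forall y : 'I_t -> int, exists k : nat, exists w : I -> int,
    (0 < k)%N /\ forall l, \sum_i co (bs l) i * w i = y l *+ k.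
Proof.
move=> /row_freeP[B eB] y.
pose w' : 'cV[rat]_#|I| := B *m \col_l (y l)%:~R.
have w'E l : \sum_k coord_mx bs l k * w' k 0 = (y l)%:~R.
  have := congr1 (fun M : 'cV[rat]_t => M l 0) (congr1 (mulmx^~ (\col_l (y l)%:~R)) eB).
  by rewrite /= mul1mx -mulmxA mxE => <-; rewrite [RHS]mxE.
have [c [w [c_gt0 wE]]] := rat_common_denom (fun i : I => w' (enum_rank i) 0).
exists c, w; split => // l.
apply: (@intr_inj rat); rewrite rmorphMn rmorph_sum /= -w'E -mulr_natr mulr_suml.
rewrite (reindex (enum_val : 'I_#|I| -> I)) /=; last first.
  by exists enum_rank => x _; rewrite ?enum_valK ?enum_rankK.
by apply: eq_bigr => k _; rewrite intrM -wE enum_valK mxE mulrA mxE.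
Qed.

End RationalLattice.

Section IntegralLattice.
Variables (V : zmodType) (P : V -> Prop) (I : finType) (co : V -> I -> int).
Hypotheses (P_closed : zmod_closedP P) (co_additive : forall i, additive_on P (co^~ i))
  (co_faithful : forall v, P v -> (forall i, co v i = 0) -> v = 0).

Lemma lattice_span : exists t (bs : 'I_t -> V),
  [/\ forall l, P (bs l), row_free (coord_mx co bs) &
      forall v, P v -> exists c : nat, exists z : 'I_t -> int,
        (0 < c)%N /\ v *+ c = \sum_l bs l *~ z l].
Proof.
have [t [bs [Pbs free_bs in_span]]] := rational_basis P co.
exists t, bs; split => // v Pv.
have [c [z [c_gt0 zE]]] := coord_row_int_comb (in_span v Pv).
have comb_in : P (\sum_l bs l *~ z l).
  by apply: (cpred_sum P_closed) => l _; apply: (cpredMz P_closed).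
have vc_in : P (v *+ c) by apply: (cpredMn P_closed).
exists c, z; split => //; apply/eqP; rewrite -subr_eq0; apply/eqP/co_faithful => [|i].
  exact: (cpredB P_closed).
have coiD := co_additive i.
rewrite (additive_onB P_closed coiD) // (additive_onMn P_closed coiD) //.
rewrite (additive_on_zcomb P_closed coiD) // zE; apply/eqP; rewrite subr_eq0.
by apply/eqP/eq_bigr => l _; rewrite mulrzz mulrC.
Qed.

End IntegralLattice.

Section GroupRing.
Variable T : finGroupType.
Implicit Types (a b : ZG T) (g h : T).

Fact gtrans_is_zmod_morphism g : zmod_morphism (gtrans g).
Proof. by move=> a b; apply/ffunP => x; rewrite !ffunE. Qed.

HB.instance Definition _ g :=
  GRing.isZmodMorphism.Build (ZG T) (ZG T) (gtrans g) (gtrans_is_zmod_morphism g).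

Lemma gtransE g a x : gtrans g a x = a (g^-1 * x)%g.
Proof. by rewrite ffunE. Qed.

Lemma gtransM g h a : gtrans (g * h) a = gtrans g (gtrans h a).
Proof. by apply/ffunP => x; rewrite !ffunE invMg mulgA. Qed.

Lemma gtransC g h a : commute g h -> gtrans g (gtrans h a) = gtrans h (gtrans g a).
Proof. by move=> gh; rewrite -!gtransM gh. Qed.

Lemma ZG_mulrnI n a b : (0 < n)%N -> a *+ n = b *+ n -> a = b.
Proof.
move=> n_gt0 e; apply/ffunP => x; move/(congr1 (fun c : ZG T => c x)): e.
by rewrite !ffunMnE => /(pmulrnI n_gt0).
Qed.

Lemma gmul_NHel (A : {set T}) r : gmul (NHel A) r = \sum_(h in A) gtrans h r.
Proof.
apply/ffunP => x; rewrite !ffunE sum_ffunE [RHS]big_mkcond /=.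
by apply: eq_bigr => h _; rewrite !ffunE; case: (h \in A); rewrite ?mul1r ?mul0r.
Qed.

Lemma gmulr0 a : gmul a 0 = 0.
Proof. by apply/ffunP => x; rewrite !ffunE big1 // => h _; rewrite ffunE mulr0. Qed.

End GroupRing.

Section CosetRing.
Variables (gT : finGroupType) (H : {group gT}).
Hypothesis nH : forall x : gT, x \in 'N(H)%g.

Definition ZG_invariant (y : ZG gT) := forall h, h \in H -> gtrans h y = y.

Definition inflate (u : ZG (coset_of H)) : ZG gT := [ffun x => u (coset H x)].

Definition deflate (y : ZG gT) : ZG (coset_of H) :=
  [ffun c : coset_of H => y (repr (c : {set gT}))].

Definition coset_sum (r : ZG gT) : ZG (coset_of H) :=
  [ffun c : coset_of H => \sum_(x | coset H x == c) r x].

Fact inflate_is_zmod_morphism : zmod_morphism inflate.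
Proof. by move=> u v; apply/ffunP => x; rewrite !ffunE. Qed.

HB.instance Definition _ :=
  GRing.isZmodMorphism.Build _ _ inflate inflate_is_zmod_morphism.

Fact deflate_is_zmod_morphism : zmod_morphism deflate.
Proof. by move=> u v; apply/ffunP => x; rewrite !ffunE. Qed.

HB.instance Definition _ :=
  GRing.isZmodMorphism.Build _ _ deflate deflate_is_zmod_morphism.

Fact coset_sum_is_zmod_morphism : zmod_morphism coset_sum.
Proof.
move=> u v; apply/ffunP => c; rewrite !ffunE -sumrB.
by apply: eq_bigr => x _; rewrite !ffunE.
Qed.

HB.instance Definition _ :=
  GRing.isZmodMorphism.Build _ _ coset_sum coset_sum_is_zmod_morphism.

Lemma cosetM x y : coset H (x * y)%g = (coset H x * coset H y)%g.
Proof. exact: morphM. Qed.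

Lemma cosetV x : coset H x^-1%g = (coset H x)^-1%g.
Proof. exact: morphV. Qed.

Lemma coset_eqP x y : reflect (coset H x = coset H y) ((x * y^-1)%g \in H).
Proof.
apply: (iffP idP) => [xyH|e].
  by rewrite -(mulgKV y x) cosetM (coset_id xyH) mul1g.
by apply: coset_idr => //; rewrite cosetM cosetV e mulgV.
Qed.

Lemma ZG_invariant_coset y x x' :
  ZG_invariant y -> coset H x = coset H x' -> y x = y x'.
Proof.
move=> y_inv /coset_eqP xx'.
by have := congr1 (fun f : ZG gT => f x) (y_inv _ xx'); rewrite gtransE invMg invgK mulgKV.
Qed.

Lemma inflate_invariant u : ZG_invariant (inflate u).
Proof.
move=> h hH; apply/ffunP => x.
by rewrite gtransE !ffunE cosetM cosetV coset_id ?invg1 ?mul1g.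
Qed.

Lemma inflateK : cancel inflate deflate.
Proof. by move=> u; apply/ffunP => c; rewrite !ffunE coset_reprK. Qed.

Lemma deflateK y : ZG_invariant y -> inflate (deflate y) = y.
Proof.
move=> y_inv; apply/ffunP => x; rewrite !ffunE; apply: ZG_invariant_coset => //.
by rewrite coset_reprK.
Qed.

Lemma inflate_inj : injective inflate.
Proof. exact: can_inj inflateK. Qed.

Lemma inflate_gtrans g u : inflate (gtrans (coset H g) u) = gtrans g (inflate u).
Proof. by apply/ffunP => x; rewrite !ffunE cosetM cosetV. Qed.

Lemma deflate_gtrans g y :
  ZG_invariant y -> deflate (gtrans g y) = gtrans (coset H g) (deflate y).
Proof.
move=> y_inv; apply/ffunP => c; rewrite !ffunE; apply: ZG_invariant_coset => //.
by rewrite cosetM cosetV !coset_reprK.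
Qed.

Lemma coset_sum_gmul a b : coset_sum (gmul a b) = gmul (coset_sum a) (coset_sum b).
Proof.
apply/ffunP => c; rewrite !ffunE.
under eq_bigr => x _ do rewrite ffunE.
rewrite exchange_big /=.
under eq_bigr => h _ do rewrite -mulr_sumr.
under [RHS]eq_bigr => d _ do rewrite !ffunE mulr_suml.
rewrite [LHS](partition_big (coset H) predT) //=.
apply: eq_bigr => d _; apply: eq_bigr => h /eqP hd; congr (_ * _).
rewrite (reindex (fun y => h * y)%g) /=; last first.
  by exists (fun x => h^-1 * x)%g => y _; rewrite ?mulKg ?mulKVg.
apply: eq_big => [y|y _]; last by rewrite mulKg.
by rewrite cosetM hd -(inj_eq (mulgI d^-1%g)) mulKg.
Qed.

Lemma coset_sum_gone : coset_sum (gone gT) = gone (coset_of H).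
Proof.
apply/ffunP => c; rewrite /gone !ffunE big_mkcond (bigD1 1%g) //= big1 => [|x nx1].
  by rewrite ffunE eqxx morph1 addr0 eq_sym; case: (c == 1%g).
by rewrite ffunE (negbTE nx1); case: ifP.
Qed.

Lemma coset_sum_gdet s (A : 'I_s -> 'I_s -> ZG gT) :
  coset_sum (gdet A) = gdet (fun i j => coset_sum (A i j)).
Proof.
rewrite /gdet raddf_sum; apply: eq_bigr => p _.
case: (odd_perm p); rewrite ?raddfN; try congr (- _);
  exact: (big_morph _ coset_sum_gmul coset_sum_gone).
Qed.

Lemma inflate_coset_sum r : inflate (coset_sum r) = gmul (NHel H) r.
Proof.
apply/ffunP => x; rewrite !ffunE.
rewrite [RHS](reindex (fun y => x * y^-1)%g) /=; last first.
  by exists (fun h => h^-1 * x)%g => y _; rewrite ?invMg ?invgK ?mulgKV ?mulKVg.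
rewrite big_mkcond; apply: eq_bigr => y _.
rewrite !ffunE invMg invgK mulgKV.
case: (boolP ((x * y^-1)%g \in H)) => [/coset_eqP e|n]; first by rewrite e eqxx mul1r.
rewrite mul0r; case: eqP => // e; case/negP: n; apply/coset_eqP; by rewrite e.
Qed.

End CosetRing.

Lemma abelianT_commute (T : finGroupType) (g h : T) : abelian [set: T] -> commute g h.
Proof. by move/centsP/(_ g (finset.in_setT g) h (finset.in_setT h)). Qed.

Section DualAction.
Variables (T : finGroupType) (A : Type).

Fact dual_act_is_zmod_morphism (g : T) : zmod_morphism (@dual_act T A g).
Proof. by move=> f f'; apply/funext => x; rewrite /dual_act !fctE raddfB. Qed.

HB.instance Definition _ g :=
  GRing.isZmodMorphism.Build (A -> ZG T) (A -> ZG T) (dual_act g)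
    (dual_act_is_zmod_morphism g).

Lemma dual_actM (g h : T) (f : A -> ZG T) :
  dual_act (g * h)%g f = dual_act g (dual_act h f).
Proof. by apply/funext => x; rewrite /dual_act gtransM. Qed.

Lemma dual_actC (g h : T) (f : A -> ZG T) :
  commute g h -> dual_act g (dual_act h f) = dual_act h (dual_act g f).
Proof. by move=> gh; rewrite -!dual_actM gh. Qed.

End DualAction.

Section Invariants.
Variables (T : finGroupType) (V : zmodType) (act : T -> V -> V) (S : V -> Prop).
Variable H : {set T}.

Lemma invar_closed : (forall g x y, act g (x - y) = act g x - act g y) ->
  zmod_closedP S -> zmod_closedP (invar act S H).
Proof.
move=> actB [S0 SB]; have act0 g : act g 0 = 0 by have := actB g 0 0; rewrite !subrr.
split => [|x y [Sx x_inv] [Sy y_inv]]; first by split=> // h _; apply: act0.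
by split=> [|h hH]; [apply: SB | rewrite actB x_inv ?y_inv].
Qed.

Lemma invar_act g x : (forall h y, act g (act h y) = act h (act g y)) ->
  (forall y, S y -> S (act g y)) -> invar act S H x -> invar act S H (act g x).
Proof.
move=> actC Sact [Sx x_inv]; split=> [|h hH]; first exact: Sact.
by rewrite -actC x_inv.
Qed.

End Invariants.

Section Duals.
Variables (T : finGroupType) (V : zmodType) (act : T -> V -> V) (S : V -> Prop).
Implicit Types (f : V -> ZG T) (x : V).

Lemma dual_additive f : dual act S f -> additive_on S f.
Proof. by case=> [[]]. Qed.

Lemma dual_equivariant f g x : dual act S f -> S x -> f (act g x) = gtrans g (f x).
Proof. by case=> [[_ fA] _] Sx; apply: fA. Qed.

Lemma dual_out f x : dual act S f -> ~ S x -> f x = 0.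
Proof. by case=> _ fO; apply: fO. Qed.

Lemma dual_closed : zmod_closedP (dual act S).
Proof.
split=> [|f f' [[fD fA] fO] [[f'D f'A] f'O]].
  by split=> [|x _]; [split=> [x y _ _|g x _] | ]; rewrite /= ?addr0 ?raddf0.
split=> [|x nSx]; last by rewrite !fctE fO ?f'O ?subr0.
split=> [x y Sx Sy|g x Sx]; rewrite !fctE ?fD ?f'D ?fA ?f'A ?raddfB //.
by rewrite opprD addrACA.
Qed.

Lemma dual_dual_act g f : abelian [set: T] -> dual act S f -> dual act S (dual_act g f).
Proof.
move=> abT [[fD fA] fO]; split=> [|x nSx]; last by rewrite /dual_act fO ?raddf0.
split=> [x y Sx Sy|h x Sx]; rewrite /dual_act ?fD ?fA ?raddfD //.
exact/gtransC/abelianT_commute.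
Qed.

Lemma dual_coord f x g : dual act S f -> S x -> f x g = f (act g^-1 x) 1%g.
Proof. by move=> Df Sx; rewrite (dual_equivariant _ Df Sx) gtransE invgK mulg1. Qed.

Lemma dual_eq_coord1 f f' : (forall g x, S x -> S (act g x)) ->
  dual act S f -> dual act S f' -> (forall x, S x -> f x 1%g = f' x 1%g) -> f = f'.
Proof.
move=> Sact Df Df' e1; apply/funext => x.
have [Sx|nSx] := pselect (S x); last by rewrite (dual_out Df nSx) (dual_out Df' nSx).
apply/ffunP => g; rewrite [LHS](dual_coord _ Df Sx) [RHS](dual_coord _ Df' Sx).
by rewrite e1 //; apply: Sact.
Qed.

End Duals.

Section Slots.
Variables (s : nat) (A : Type).
Implicit Types (fs : 'I_s -> A).

Lemma upd_same fs i a : upd fs i a i = a.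
Proof. by rewrite /upd eqxx. Qed.

Lemma upd_other fs i a j : j != i -> upd fs i a j = fs j.
Proof. by rewrite /upd => /negbTE ->. Qed.

Lemma upd_id fs i : upd fs i (fs i) = fs.
Proof. by apply/funext => j; rewrite /upd; case: eqP => // ->. Qed.

Lemma upd_upd fs i a b : upd (upd fs i a) i b = upd fs i b.
Proof. by apply/funext => j; rewrite /upd; case: eqP. Qed.

Lemma upd_updC fs i j a b : i != j -> upd (upd fs i a) j b = upd (upd fs j b) i a.
Proof.
move=> ij; apply/funext => k; rewrite /upd; case: (eqVneq k j) => [->|kj] //.
by rewrite eq_sym (negbTE ij).
Qed.

Lemma upd_comp (B : Type) (h : A -> B) fs i a :
  (fun k => h (upd fs i a k)) = upd (fun k => h (fs k)) i (h a).
Proof. by apply/funext => k; rewrite /upd; case: eqP. Qed.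

Lemma upd_all (P : A -> Prop) fs i a : (forall k, P (fs k)) -> P a -> forall k, P (upd fs i a k).
Proof. by move=> Pfs Pa k; rewrite /upd; case: eqP. Qed.

End Slots.

Section Multiadditive.
Variables (T : finGroupType) (V : zmodType) (act : T -> V -> V) (S : V -> Prop) (s : nat).
Local Notation Du := (dual act S).

Definition multiadditive (F : ('I_s -> V -> ZG T) -> ZG T) :=
  forall (fs : 'I_s -> V -> ZG T) (i : 'I_s) (f f' : V -> ZG T),
    (forall k, Du (fs k)) -> Du f -> Du f' ->
    F (upd fs i (f + f')) = F (upd fs i f) + F (upd fs i f').

Lemma ext_bidual_multiadditive F : ext_bidual act S s F -> multiadditive F.
Proof. by case. Qed.

Lemma ext_bidual_equivariant F fs i g : ext_bidual act S s F -> (forall k, Du (fs k)) ->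
  F (upd fs i (dual_act g (fs i))) = gtrans g (F fs).
Proof. by case=> _ [FA _] Dfs; apply: FA. Qed.

Lemma ext_bidual_alternating F fs i j : ext_bidual act S s F -> (forall k, Du (fs k)) ->
  i != j -> fs i = fs j -> F fs = 0.
Proof. by case=> _ [_ [Falt _]]; apply: Falt. Qed.

Lemma ext_bidual_out F fs : ext_bidual act S s F -> ~ (forall k, Du (fs k)) -> F fs = 0.
Proof. by case=> _ [_ [_ FO]]; apply: FO. Qed.

Lemma multiadditive_Mn F fs i f n : multiadditive F -> (forall k, Du (fs k)) -> Du f ->
  F (upd fs i (f *+ n)) = F (upd fs i f) *+ n.
Proof.
move=> FD Dfs; have FDi : additive_on Du (fun g => F (upd fs i g)).
  by move=> f1 f2 Df1 Df2; apply: FD.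
exact: (additive_onMn (dual_closed act S) FDi).
Qed.

Lemma multiadditive_scale F fs (ks : 'I_s -> nat) : multiadditive F ->
  (forall k, Du (fs k)) -> F (fun i => fs i *+ ks i) = F fs *+ \prod_i ks i.
Proof.
move=> FD Dfs.
suff scale_on r : uniq r ->
    F (fun i => if i \in r then fs i *+ ks i else fs i) = F fs *+ \prod_(i <- r) ks i.
  rewrite -scale_on ?index_enum_uniq //; congr F.
  by apply/funext => i; rewrite mem_index_enum.
elim: r => [|i r IH] /=; first by rewrite big_nil mulr1n.
case/andP=> i_r uniq_r.
set g := fun k => if k \in r then fs k *+ ks k else fs k.
have Dg k : Du (g k).
  by rewrite /g; case: ifP => _; [apply: (cpredMn (dual_closed act S)) | apply: Dfs].
have gi : g i = fs i by rewrite /g (negbTE i_r).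
have -> : (fun k => if k \in i :: r then fs k *+ ks k else fs k) = upd g i (fs i *+ ks i).
  by apply/funext => k; rewrite /upd /g in_cons; case: eqP => [->|].
rewrite multiadditive_Mn // -gi upd_id IH // big_cons.
by rewrite mulnC mulrnA.
Qed.

End Multiadditive.

Section Setting.
Variables (gT : finGroupType) (X : zmodType) (act : gT -> X -> X) (H : {group gT}).
Hypothesis abG : abelian [set: gT].

(* Mdual, BidH and BidHdual are the M^{*}, V and V^{*} of the header. *)
Local Notation Q := (coset_of H).
Local Notation Mdual := (dual act (fun _ => True)).
Local Notation Bid := ((X -> ZG gT) -> ZG gT).
Local Notation BidH := (invar (@dual_act gT (X -> ZG gT)) (bidual_set act) H).
Local Notation actQ := (@cqact gT H _ (@dual_act gT (X -> ZG gT))).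
Local Notation BidHdual := (@dual Q Bid actQ BidH).

Lemma normG_abelian (x : gT) : x \in 'N(H)%g.
Proof.
have /fintype.subsetP := sub_abelian_norm abG (finset.subsetT H).
by apply; rewrite finset.in_setT.
Qed.

Local Notation nH := normG_abelian.

Lemma quotient_abelianT : abelian [set: Q].
Proof.
apply/centsP => c _ d _; rewrite -(coset_reprK c) -(coset_reprK d).
by rewrite /commute -!(cosetM nH) (abelianT_commute _ _ abG).
Qed.

Lemma Mdual_act g f : Mdual f -> Mdual (dual_act g f).
Proof. exact: dual_dual_act. Qed.

Lemma BidH_closed : zmod_closedP BidH.
Proof. by apply: invar_closed => [g f f'|]; [rewrite raddfB | apply: dual_closed]. Qed.

Lemma BidH_act g phi : BidH phi -> BidH (dual_act g phi).
Proof.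
apply: invar_act => [h psi|psi]; first exact/dual_actC/abelianT_commute.
exact: dual_dual_act.
Qed.

Lemma BidH_invariant phi f : BidH phi -> ZG_invariant H (phi f).
Proof. by case=> _ phi_inv h hH; exact: (congr1 (fun F => F f) (phi_inv h hH)). Qed.

Lemma actQ_coset g phi : BidH phi -> actQ (coset H g) phi = dual_act g phi.
Proof.
case=> _ phi_inv; rewrite /cqact.
have [h hH ->] : exists2 h, h \in H & repr (coset H g : {set gT}) = (g * h)%g.
  exists (g^-1 * repr (coset H g : {set gT}))%g; last by rewrite mulKVg.
  by apply: coset_idr; rewrite ?nH // (cosetM nH) (cosetV nH) coset_reprK mulVg.
by rewrite dual_actM phi_inv.
Qed.

Lemma BidHdual_equivariant e g phi :
  BidHdual e -> BidH phi -> e (dual_act g phi) = gtrans (coset H g) (e phi).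
Proof. by move=> De Bphi; rewrite -actQ_coset // (dual_equivariant _ De). Qed.

Definition evalH (f : X -> ZG gT) : Bid -> ZG Q :=
  fun phi => if `[< BidH phi >] then deflate H (phi f) else 0.

Lemma evalHE f phi : BidH phi -> evalH f phi = deflate H (phi f).
Proof. by move=> Bphi; rewrite /evalH asboolT. Qed.

Lemma evalH_out f phi : ~ BidH phi -> evalH f phi = 0.
Proof. by move=> Bphi; rewrite /evalH asboolF. Qed.

Lemma evalH_dual f : Mdual f -> BidHdual (evalH f).
Proof.
move=> Df; split => [|phi /evalH_out //]; split => [phi psi Bphi Bpsi|c phi Bphi].
  by rewrite !evalHE -?raddfD //; apply: (cpredD BidH_closed).
rewrite -(coset_reprK c) actQ_coset // !evalHE //; last exact: BidH_act.
by rewrite /dual_act (deflate_gtrans nH) //; apply: BidH_invariant.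
Qed.

Lemma evalHD f f' : Mdual f -> Mdual f' -> evalH (f + f') = evalH f + evalH f'.
Proof.
move=> Df Df'; apply/funext => phi; rewrite -[RHS]/(evalH f phi + evalH f' phi).
have [Bphi|nBphi] := pselect (BidH phi); last by rewrite !evalH_out // addr0.
by rewrite !evalHE // (dual_additive Bphi.1) // raddfD.
Qed.

Lemma evalH_act g f : Mdual f -> evalH (dual_act g f) = dual_act (coset H g) (evalH f).
Proof.
move=> Df; apply/funext => phi; rewrite /dual_act.
have [Bphi|nBphi] := pselect (BidH phi); last by rewrite !evalH_out // raddf0.
rewrite !evalHE // (dual_equivariant _ Bphi.1) // (deflate_gtrans nH) //.
exact: BidH_invariant.
Qed.

Lemma BidH_zcomb_at1 (J : finType) (bs : J -> X -> ZG gT) (gs : J -> gT) (w : J -> int)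
    phi :
  BidH phi -> (forall j, Mdual (bs j)) ->
  phi (\sum_j dual_act (gs j)^-1 (bs j) *~ w j) 1%g = \sum_j phi (bs j) (gs j) * w j.
Proof.
move=> Bphi Dbs; have Dterm j : Mdual (dual_act (gs j)^-1 (bs j)) by apply: Mdual_act.
have phiD := dual_additive Bphi.1.
rewrite (additive_on_zcomb (dual_closed _ _) phiD) // sum_ffunE.
apply: eq_bigr => j _; rewrite (dual_equivariant _ Bphi.1) //.
by rewrite ffunMzE gtransE invgK mulg1 mulrzz.
Qed.

Section FinitelyGenerated.
Variable gens : seq X.
Hypothesis gensP : forall x : X, exists r : 'I_(size gens) -> ZG gT,
  x = \sum_(i < size gens) gscale act (r i) gens`_i.

Lemma Mdual_eq0 f : Mdual f -> (forall i : 'I_(size gens), f gens`_i = 0) -> f = 0.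
Proof.
move=> Df f0; have fD := additive_on_sum (zmod_closedT X) (dual_additive Df).
apply/funext => x; have [r ->] := gensP x.
rewrite fD // big1 // => i _; rewrite /gscale fD // big1 // => g _.
rewrite (additive_onMz (zmod_closedT X) (dual_additive Df)) //.
by rewrite (dual_equivariant _ Df) // f0 raddf0 mul0rz.
Qed.

Lemma Mdual_lattice : exists t (bs : 'I_t -> X -> ZG gT), (forall l, Mdual (bs l)) /\
  forall f, Mdual f -> exists c : nat, exists z : 'I_t -> int,
    (0 < c)%N /\ f *+ c = \sum_l bs l *~ z l.
Proof.
pose co (f : X -> ZG gT) (p : 'I_(size gens) * gT) := f gens`_(p.1) p.2.
have [p f f' _ _|f Df co0|t [bs [Dbs _ span]]] := @lattice_span _ Mdual _ co (dual_closed _ _).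
- by rewrite /co -[LHS]/((f gens`_p.1 + f' gens`_p.1) p.2) ffunE.
- by apply: Mdual_eq0 => // i; apply/ffunP => g; rewrite ffunE -(co0 (i, g)).
by exists t, bs.
Qed.

Lemma BidH_lattice t (bs : 'I_t -> X -> ZG gT) :
  (forall l, Mdual (bs l)) ->
  (forall f, Mdual f -> exists c : nat, exists z : 'I_t -> int,
    (0 < c)%N /\ f *+ c = \sum_l bs l *~ z l) ->
  let co (phi : Bid) (p : 'I_t * gT) := phi (bs p.1) p.2 in
  exists t' (ps : 'I_t' -> Bid), [/\ forall j, BidH (ps j), row_free (coord_mx co ps) &
    forall phi, BidH phi -> exists c : nat, exists z : 'I_t' -> int,
      (0 < c)%N /\ phi *+ c = \sum_j ps j *~ z j].
Proof.
move=> Dbs bs_span co.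
apply: lattice_span => [|p phi psi _ _|phi Bphi co0]; first exact: BidH_closed.
  by rewrite /co -[LHS]/((phi (bs p.1) + psi (bs p.1)) p.2) ffunE.
apply/funext => f; have [Df|nDf] := pselect (Mdual f); last first.
  by rewrite (dual_out Bphi.1 nDf).
have [c [z [c_gt0 fE]]] := bs_span f Df.
apply: (ZG_mulrnI c_gt0).
apply: (additive_on_span_eqMn (dual_closed _ _) (dual_additive Bphi.1) _ Dbs Df fE).
  by move=> ? ? _ _; rewrite addr0.
by move=> l; apply/ffunP => g; rewrite ffunE -(co0 (l, g)).
Qed.

Lemma evalH_coker_torsion e : BidHdual e ->
  exists k : nat, exists f, [/\ (0 < k)%N, Mdual f & e *+ k = evalH f].
Proof.
move=> De; have [t [bs [Dbs bs_span]]] := Mdual_lattice.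
have [t' [ps [Bps free_ps ps_span]]] := BidH_lattice Dbs bs_span.
have [k [w [k_gt0 wE]]] := row_free_int_solve free_ps (fun j => e (ps j) 1%g).
pose f := \sum_(p : 'I_t * gT) dual_act p.2^-1 (bs p.1) *~ w p.
have Df : Mdual f.
  apply: (cpred_sum (dual_closed _ _)) => p _; apply: (cpredMz (dual_closed _ _)).
  exact: Mdual_act.
exists k, f; split => //.
have Dek : BidHdual (e *+ k) by apply: (cpredMn (dual_closed _ _)).
apply: (dual_eq_coord1 _ Dek (evalH_dual Df)) => [c phi Bphi|phi Bphi].
  exact: BidH_act.
have phi_f1 : phi f 1%g = \sum_p phi (bs p.1) p.2 * w p by apply: BidH_zcomb_at1.
rewrite evalHE // ffunE repr_coset1 phi_f1 natmulfctE ffunMnE.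
(* Both sides are additive in phi and, by the choice of w, agree on the basis ps. *)
have [c [z [c_gt0 phiE]]] := ps_span phi Bphi.
apply: (pmulrnI c_gt0).
apply: (@additive_on_span_eqMn _ _ _ (fun psi => e psi 1%g *+ k)
  (fun psi => \sum_p psi (bs p.1) p.2 * w p) _ _ _ _ _ BidH_closed _ _ Bps Bphi phiE).
- move=> psi psi' Bpsi Bpsi'; rewrite -mulrnDl.
  by rewrite (dual_additive De) // ffunE.
- move=> psi psi' Bpsi Bpsi'; rewrite -big_split; apply: eq_bigr => p _ /=.
  by rewrite ffunE mulrDl.
- by move=> j; rewrite wE.
Qed.

Lemma evalH_scale s (es : 'I_s -> Bid -> ZG Q) : (forall k, BidHdual (es k)) ->
  exists K : nat, exists fs : 'I_s -> X -> ZG gT,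
  [/\ (0 < K)%N, forall k, Mdual (fs k), forall i j, es i = es j -> fs i = fs j &
      forall F, multiadditive actQ BidH F -> F es *+ K = F (fun i => evalH (fs i))].
Proof.
(* Lifting each form rather than each index makes equal forms get equal lifts. *)
move=> Des; have /choice[kf kfP] : forall e, exists kf : nat * (X -> ZG gT),
    BidHdual e -> [/\ (0 < kf.1)%N, Mdual kf.2 & e *+ kf.1 = evalH kf.2].
  move=> e; have [De|nDe] := pselect (BidHdual e); last by exists (0%N, 0).
  by have [k [f kfP]] := evalH_coker_torsion De; exists (k, f).
exists (\prod_k (kf (es k)).1), (fun k => (kf (es k)).2).
split=> [|k|i j -> //|F FD].
- by rewrite prodn_gt0 // => k; case: (kfP _ (Des k)).
- by case: (kfP _ (Des k)).
- rewrite -(multiadditive_scale _ FD Des); congr F; apply/funext => k.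
  by case: (kfP _ (Des k)).
Qed.

Section Pullback.
Variable s : nat.

Local Notation extQ := (ext_bidual actQ BidH s).
Local Notation extH := (invar (@bid_act gT ('I_s -> X -> ZG gT))
  (ext_bidual act (fun _ => True) s) H).

Definition pullback (F : ('I_s -> Bid -> ZG Q) -> ZG Q) : ('I_s -> X -> ZG gT) -> ZG gT :=
  fun fs => if `[< forall k, Mdual (fs k) >] then inflate (F (fun i => evalH (fs i)))
            else 0.

Lemma pullbackE F fs : (forall k, Mdual (fs k)) ->
  pullback F fs = inflate (F (fun i => evalH (fs i))).
Proof. by move=> Dfs; rewrite /pullback asboolT. Qed.

Lemma pullback_out F fs : ~ (forall k, Mdual (fs k)) -> pullback F fs = 0.
Proof. by move=> nDfs; rewrite /pullback asboolF. Qed.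

Lemma pullback_ext_bidual F : extQ F -> extH (pullback F).
Proof.
move=> extF; split; last first.
  move=> h hH; apply/funext => fs; rewrite /bid_act.
  have [Dfs|nDfs] := pselect (forall k, Mdual (fs k)); last by rewrite pullback_out ?raddf0.
  by rewrite pullbackE // (inflate_invariant nH).
have DevalH (fs : 'I_s -> X -> ZG gT) :
    (forall k, Mdual (fs k)) -> forall k, BidHdual (evalH (fs k)).
  by move=> Dfs k; apply: evalH_dual.
split; [|split; [|split]].
- move=> fs i f f' Dfs Df Df'; have Dff' := cpredD (dual_closed _ _) Df Df'.
  rewrite !pullbackE; try solve [exact: Dfs | exact: upd_all].
  rewrite !upd_comp evalHD // -raddfD.
  by rewrite (ext_bidual_multiadditive extF) //; [apply: DevalH | apply: evalH_dual..].
- move=> fs i g Dfs; have Dg := Mdual_act g (Dfs i).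
  rewrite !pullbackE; try solve [exact: Dfs | exact: upd_all].
  rewrite upd_comp evalH_act ?Dfs //.
  by rewrite (ext_bidual_equivariant _ _ extF) ?(inflate_gtrans nH) //; apply: DevalH.
- move=> fs i j Dfs ij fs_ij; rewrite pullbackE //.
  by rewrite (ext_bidual_alternating extF (DevalH _ Dfs) ij) ?fs_ij // raddf0.
- by move=> fs nDfs; rewrite pullback_out.
Qed.

Lemma pullbackD F F' : pullback (F + F') = pullback F + pullback F'.
Proof.
apply/funext => fs; rewrite -[RHS]/(pullback F fs + pullback F' fs).
have [Dfs|nDfs] := pselect (forall k, Mdual (fs k)); last by rewrite !pullback_out ?addr0.
by rewrite !pullbackE // -raddfD.
Qed.

Lemma pullback_act c F :
  pullback (bid_act c F) = cqact (@bid_act gT ('I_s -> X -> ZG gT)) c (pullback F).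
Proof.
apply/funext => fs; rewrite /cqact /bid_act.
have [Dfs|nDfs] := pselect (forall k, Mdual (fs k)); last by rewrite !pullback_out ?raddf0.
by rewrite !pullbackE // -(inflate_gtrans nH) coset_reprK.
Qed.

Lemma pullback_inj F F' : extQ F -> extQ F' -> pullback F = pullback F' -> F = F'.
Proof.
move=> extF extF' eqFF'; apply/funext => es.
have [Des|nDes] := pselect (forall k, BidHdual (es k)); last first.
  by rewrite !(ext_bidual_out _ nDes).
have [K [fs [K_gt0 Dfs _ scale]]] := evalH_scale Des.
apply: (ZG_mulrnI K_gt0); rewrite !scale; try exact: ext_bidual_multiadditive.
by apply: (inflate_inj (H := H)); rewrite -!pullbackE // eqFF'.
Qed.

Section Extension.
Variable Psi : ('I_s -> X -> ZG gT) -> ZG gT.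
Hypothesis extPsi : extH Psi.

Local Notation Dall fs := (forall k, Mdual (fs k)).
Local Notation Eall es := (forall k, BidHdual (es k)).

Lemma Psi_invariant fs : ZG_invariant H (Psi fs).
Proof. by move=> h hH; case: extPsi => _ /(_ h hH)/(congr1 (fun F => F fs)). Qed.

Definition free_slot (i : 'I_s) (G : ('I_s -> X -> ZG gT) -> ZG Q)
    (fs : 'I_s -> X -> ZG gT) : Bid :=
  fun f => if `[< Mdual f >] then inflate (G (upd fs i f)) else 0.

(* iter_eval s es fs = es (s-1) (f_(s-1) |-> ... es 0 (f_0 |-> Psi (f_0, ..., f_(s-1))) ...);
   for m < s only the slots below m are evaluated and the others are read off fs. *)
Fixpoint iter_eval (m : nat) (es : 'I_s -> Bid -> ZG Q) : ('I_s -> X -> ZG gT) -> ZG Q :=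
  if m is m'.+1 then fun fs =>
    if insub m' is Some i then es i (free_slot i (iter_eval m' es) fs)
    else iter_eval m' es fs
  else fun fs => deflate H (Psi fs).

Lemma free_slotE i G fs f : Mdual f -> free_slot i G fs f = inflate (G (upd fs i f)).
Proof. by move=> Df; rewrite /free_slot asboolT. Qed.

Lemma free_slot_out i G fs f : ~ Mdual f -> free_slot i G fs f = 0.
Proof. by move=> nDf; rewrite /free_slot asboolF. Qed.

Lemma iter_evalS m (lt_ms : (m < s)%N) es fs :
  iter_eval m.+1 es fs = es (Ordinal lt_ms) (free_slot (Ordinal lt_ms) (iter_eval m es) fs).
Proof. by rewrite /= insubT. Qed.

Lemma iter_eval_eq_slots m es fs fs' : (forall i : 'I_s, (m <= i)%N -> fs i = fs' i) ->
  iter_eval m es fs = iter_eval m es fs'.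
Proof.
elim: m fs fs' => [|m IH] fs fs' eq_fs.
  by congr (deflate H (Psi _)); apply/funext => i; apply: eq_fs.
rewrite /=; case: insubP => [i _ iE|/negP m_ge_s]; last first.
  by apply: IH => i le_mi; case: m_ge_s; apply: leq_ltn_trans le_mi (ltn_ord i).
congr (es i _); apply/funext => f; rewrite /free_slot; case: ifP => // _; congr inflate.
apply: IH => j le_mj; rewrite /upd; case: eqP => // /eqP ji; apply: eq_fs.
by rewrite ltn_neqAle le_mj andbT -iE; apply: contra ji => /eqP/val_inj ->.
Qed.

Lemma iter_eval_eq_forms m es es' fs : (forall j : 'I_s, (j < m)%N -> es j = es' j) ->
  iter_eval m es fs = iter_eval m es' fs.
Proof.
elim: m fs => [|m IH] fs eq_es //=.
case: insubP => [i _ iE|_]; last by apply: IH => j lt_jm; apply/eq_es/ltnW.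
rewrite eq_es ?iE //; congr (es' i _); apply/funext => f; rewrite /free_slot.
by case: ifP => // _; rewrite IH // => j lt_jm; apply/eq_es/ltnW.
Qed.

Lemma iter_eval_const es fs : iter_eval s es fs = iter_eval s es (fun _ => 0).
Proof. by apply: iter_eval_eq_slots => k; rewrite leqNgt ltn_ord. Qed.

Definition slots_additive m := forall es fs (i : 'I_s) f f', Eall es -> Dall fs ->
  (m <= i)%N -> Mdual f -> Mdual f' ->
  iter_eval m es (upd fs i (f + f')) = iter_eval m es (upd fs i f) + iter_eval m es (upd fs i f').

Definition slots_equivariant m := forall es fs (i : 'I_s) g, Eall es -> Dall fs ->
  (m <= i)%N ->
  iter_eval m es (upd fs i (dual_act g (fs i))) = gtrans (coset H g) (iter_eval m es fs).

Definition forms_additive m := forall es fs (j : 'I_s) e e', Eall es -> Dall fs ->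
  (j < m)%N -> BidHdual e -> BidHdual e' ->
  iter_eval m (upd es j (e + e')) fs = iter_eval m (upd es j e) fs + iter_eval m (upd es j e') fs.

Definition forms_equivariant m := forall es fs (j : 'I_s) c, Eall es -> Dall fs ->
  (j < m)%N -> iter_eval m (upd es j (dual_act c (es j))) fs = gtrans c (iter_eval m es fs).

Lemma free_slot_BidH m es fs (i : 'I_s) : slots_additive m -> slots_equivariant m ->
  Eall es -> Dall fs -> nat_of_ord i = m -> BidH (free_slot i (iter_eval m es) fs).
Proof.
move=> addm eqvm Des Dfs iE; split; last first.
  move=> h hH; apply/funext => f; rewrite /dual_act.
  have [Df|nDf] := pselect (Mdual f); last by rewrite free_slot_out ?raddf0.
  by rewrite free_slotE // (inflate_invariant nH).
split; [split|] => [f f' Df Df'|g f Df|f nDf]; last exact: free_slot_out.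
  have Dff' := cpredD (dual_closed _ _) Df Df'.
  by rewrite !free_slotE // addm ?iE // raddfD.
have Dgf := Mdual_act g Df; rewrite !free_slotE //.
have le_mi : (m <= i)%N by rewrite iE.
have := eqvm es (upd fs i f) i g Des (upd_all _ Dfs Df) le_mi.
by rewrite upd_upd upd_same => ->; rewrite (inflate_gtrans nH).
Qed.

Lemma slots_additiveS m : (m < s)%N ->
  slots_additive m -> slots_equivariant m -> slots_additive m.+1.
Proof.
move=> lt_ms addm eqvm es fs i' f f' Des Dfs lt_mi' Df Df'.
pose i := Ordinal lt_ms; have i'i : i' != i by rewrite -val_eqE neq_ltn lt_mi' orbT.
rewrite !(iter_evalS lt_ms) -/i.
have -> : free_slot i (iter_eval m es) (upd fs i' (f + f')) =
    free_slot i (iter_eval m es) (upd fs i' f) + free_slot i (iter_eval m es) (upd fs i' f').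
  apply/funext => f0; rewrite -[RHS]/(_ f0 + _ f0).
  have [Df0|nDf0] := pselect (Mdual f0); last by rewrite !free_slot_out ?addr0.
  rewrite !free_slotE // -raddfD !(upd_updC _ _ _ i'i) addm ?(ltnW lt_mi') //.
  exact: upd_all.
by rewrite (dual_additive (Des i)) //; apply: free_slot_BidH => //; apply: upd_all.
Qed.

Lemma slots_equivariantS m : (m < s)%N ->
  slots_additive m -> slots_equivariant m -> slots_equivariant m.+1.
Proof.
move=> lt_ms addm eqvm es fs i' g Des Dfs lt_mi'.
pose i := Ordinal lt_ms; have i'i : i' != i by rewrite -val_eqE neq_ltn lt_mi' orbT.
rewrite !(iter_evalS lt_ms) -/i.
have -> : free_slot i (iter_eval m es) (upd fs i' (dual_act g (fs i'))) =
    dual_act g (free_slot i (iter_eval m es) fs).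
  apply/funext => f0; rewrite /dual_act.
  have [Df0|nDf0] := pselect (Mdual f0); last by rewrite !free_slot_out ?raddf0.
  rewrite !free_slotE // (upd_updC _ _ _ i'i).
  have := eqvm es (upd fs i f0) i' g Des (upd_all _ Dfs Df0) (ltnW lt_mi').
  by rewrite upd_other // => ->; rewrite (inflate_gtrans nH).
by rewrite (BidHdual_equivariant _ (Des i)) //; apply: free_slot_BidH.
Qed.

Lemma slots_additive_equivariant m : (m <= s)%N -> slots_additive m /\ slots_equivariant m.
Proof.
elim: m => [|m IH] le_ms.
  split=> [es fs i f f' _ Dfs _ Df Df'|es fs i g _ Dfs _] /=.
    by rewrite (ext_bidual_multiadditive extPsi.1) // raddfD.
  rewrite (ext_bidual_equivariant _ _ extPsi.1) // (deflate_gtrans nH) //.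
  exact: Psi_invariant.
have [addm eqvm] := IH (ltnW le_ms).
by split; [apply: slots_additiveS | apply: slots_equivariantS].
Qed.

Lemma iter_eval_upd_form m (lt_ms : (m < s)%N) es e :
  iter_eval m (upd es (Ordinal lt_ms) e) = iter_eval m es.
Proof.
apply/funext => fs; apply: iter_eval_eq_forms => j lt_jm.
by rewrite upd_other // -val_eqE neq_ltn lt_jm.
Qed.

Lemma ltn_neq_ordS m (lt_ms : (m < s)%N) (j : 'I_s) :
  (j < m.+1)%N -> j != Ordinal lt_ms -> (j < m)%N.
Proof. by rewrite ltnS leq_eqVlt -val_eqE => /orP[->|]. Qed.

Lemma forms_additiveS m : (m < s)%N -> forms_additive m -> forms_additive m.+1.
Proof.
move=> lt_ms addm es fs j e e' Des Dfs lt_jm De De'.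
have [addm' eqvm'] := slots_additive_equivariant (ltnW lt_ms).
pose i := Ordinal lt_ms; rewrite !(iter_evalS lt_ms) -/i.
have [->|ji] := eqVneq j i; first by rewrite !upd_same !iter_eval_upd_form.
have lt_jm' := ltn_neq_ordS lt_jm ji.
rewrite !upd_other 1?eq_sym //.
have -> : free_slot i (iter_eval m (upd es j (e + e'))) fs =
    free_slot i (iter_eval m (upd es j e)) fs + free_slot i (iter_eval m (upd es j e')) fs.
  apply/funext => f0; rewrite -[RHS]/(_ f0 + _ f0).
  have [Df0|nDf0] := pselect (Mdual f0); last by rewrite !free_slot_out ?addr0.
  by rewrite !free_slotE // -raddfD addm //; apply: upd_all.
by rewrite (dual_additive (Des i)) //; apply: free_slot_BidH => //; apply: upd_all.
Qed.

Lemma forms_equivariantS m : (m < s)%N -> forms_equivariant m -> forms_equivariant m.+1.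
Proof.
move=> lt_ms eqvm es fs j c Des Dfs lt_jm.
have [addm' eqvm'] := slots_additive_equivariant (ltnW lt_ms).
pose i := Ordinal lt_ms; rewrite !(iter_evalS lt_ms) -/i.
have [->|ji] := eqVneq j i; first by rewrite !upd_same !iter_eval_upd_form.
have lt_jm' := ltn_neq_ordS lt_jm ji.
rewrite !upd_other 1?eq_sym //.
have -> : free_slot i (iter_eval m (upd es j (dual_act c (es j)))) fs =
    actQ c (free_slot i (iter_eval m es) fs).
  apply/funext => f0; rewrite /cqact /dual_act.
  have [Df0|nDf0] := pselect (Mdual f0); last by rewrite !free_slot_out ?raddf0.
  rewrite !free_slotE // eqvm //; last exact: upd_all.
  by rewrite -(inflate_gtrans nH) coset_reprK.
by rewrite (dual_equivariant _ (Des i)) //; apply: free_slot_BidH.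
Qed.

Lemma forms_additive_equivariant m : (m <= s)%N -> forms_additive m /\ forms_equivariant m.
Proof.
elim: m => [|m IH] le_ms; first by split=> es fs j; rewrite ltn0.
have [addm eqvm] := IH (ltnW le_ms).
by split; [apply: forms_additiveS | apply: forms_equivariantS].
Qed.

Lemma iter_eval_evalH m fs : Dall fs -> (m <= s)%N ->
  iter_eval m (fun i => evalH (fs i)) fs = deflate H (Psi fs).
Proof.
move=> Dfs; elim: m => [|m IH] le_ms //.
have [addm eqvm] := slots_additive_equivariant (ltnW le_ms).
rewrite (iter_evalS le_ms) evalHE; last first.
  by apply: free_slot_BidH => // k; apply: evalH_dual.
by rewrite free_slotE // upd_id inflateK IH // ltnW.
Qed.

Definition extension (es : 'I_s -> Bid -> ZG Q) : ZG Q :=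
  if `[< Eall es >] then iter_eval s es (fun _ => 0) else 0.

Lemma extension_ext_bidual : extQ extension.
Proof.
have [addS eqvS] := forms_additive_equivariant (leqnn s).
have D0 : Dall (fun _ : 'I_s => 0 : X -> ZG gT) by move=> k; apply: cpred0 (dual_closed _ _).
have extensionE es : Eall es -> extension es = iter_eval s es (fun _ => 0).
  by move=> Des; rewrite /extension asboolT.
have ext_add : multiadditive actQ BidH extension.
  move=> es i e e' Des De De'; have De_e' := cpredD (dual_closed _ _) De De'.
  by rewrite !extensionE ?addS //; apply: upd_all.
split; [by [] | split; [|split]].
- move=> es i c Des; have Dc := dual_dual_act c quotient_abelianT (Des i).
  by rewrite !extensionE ?eqvS //; apply: upd_all.
- move=> es i j Des ij es_ij; have [K [fs [K_gt0 Dfs fs_ij scale]]] := evalH_scale Des.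
  apply: (ZG_mulrnI K_gt0); rewrite mul0rn scale // extensionE; last by move=> k; apply: evalH_dual.
  rewrite -(iter_eval_const _ fs) iter_eval_evalH //.
  by rewrite (ext_bidual_alternating extPsi.1 Dfs ij (fs_ij _ _ es_ij)) raddf0.
- by move=> es nDes; rewrite /extension asboolF.
Qed.

Lemma pullback_extension : pullback extension = Psi.
Proof.
apply/funext => fs; have [Dfs|nDfs] := pselect (Dall fs); last first.
  by rewrite pullback_out // (ext_bidual_out extPsi.1).
rewrite pullbackE // /extension asboolT => [|k]; last exact: evalH_dual.
by rewrite -(iter_eval_const _ fs) iter_eval_evalH // (deflateK nH) //; apply: Psi_invariant.
Qed.

End Extension.

End Pullback.

End FinitelyGenerated.

Section NormElements.
Hypotheses (actD : forall g x y, act g (x + y) = act g x + act g y)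
  (actM : forall g h x, act (g * h)%g x = act g (act h x)).

Lemma normH_invariant a h : h \in H -> act h (normH act H a) = normH act H a.
Proof.
move=> hH; have act0 : act h 0 = 0 by apply: (addrI (act h 0)); rewrite -actD !addr0.
rewrite /normH (big_morph _ (actD h) act0); under eq_bigr => h' _ do rewrite -actM.
by rewrite [RHS](reindex_inj (mulgI h)) /=; apply: eq_bigl => x; rewrite groupMl.
Qed.

Lemma evb_normH_BidH a : BidH (evb act (normH act H a)).
Proof.
split; last first.
  move=> h hH; apply/funext => f; rewrite /dual_act /evb.
  have [Df|nDf] := pselect (Mdual f); last by rewrite asboolF ?raddf0.
  by rewrite asboolT // -(dual_equivariant _ Df) ?normH_invariant.
split=> [|f nDf]; last by rewrite /evb asboolF.
split=> [f f' Df Df'|g f Df]; rewrite /evb !asboolT //.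
  exact: (cpredD (dual_closed _ _)).
exact: Mdual_act.
Qed.

Lemma Mdual_normH f a : Mdual f -> f (normH act H a) = gmul (NHel H) (f a).
Proof.
move=> Df; rewrite /normH (additive_on_sum (zmod_closedT X) (dual_additive Df)) //.
by rewrite gmul_NHel; apply: eq_bigr => h _; rewrite (dual_equivariant _ Df).
Qed.

Lemma pullback_xi s (a : 'I_s -> X) :
  pullback (xi actQ BidH (fun i => evb act (normH act H (a i))))
  = (fun fs => gmul (NHel H) (xi act (fun _ => True) a fs)).
Proof.
apply/funext => fs; have [Dfs|nDfs] := pselect (forall k, Mdual (fs k)); last first.
  by rewrite pullback_out // /xi asboolF // gmulr0.
rewrite pullbackE // /xi !asboolT // => [|k]; last exact: evalH_dual.
have -> : (fun i j => evalH (fs i) (evb act (normH act H (a j)))) =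
          (fun i j => coset_sum H (fs i (a j))).
  apply/funext => i; apply/funext => j; rewrite evalHE; last exact: evb_normH_BidH.
  by rewrite /evb asboolT ?Mdual_normH // -(inflate_coset_sum nH) inflateK.
by rewrite -(inflate_coset_sum nH) (coset_sum_gdet nH).
Qed.

End NormElements.

End Setting.

Unset Implicit Arguments.
Theorem mainTheorem7 (gT : finGroupType) (X : zmodType) (act : gT -> X -> X)
  (H : {group gT}) (s : nat) :
  abelian [set: gT] ->
  (forall g x y, act g (x + y) = act g x + act g y) ->
  (forall x, act 1%g x = x) ->
  (forall g h x, act (g * h)%g x = act g (act h x)) ->
  fin_gen act ->
  exists Phi : (('I_s -> (((X -> ZG gT) -> ZG gT) -> ZG (coset_of H)))
                  -> ZG (coset_of H)) ->
               (('I_s -> (X -> ZG gT)) -> ZG gT),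
    ZGiso
      (@bid_act (coset_of H) ('I_s -> (((X -> ZG gT) -> ZG gT) -> ZG (coset_of H))))
      (ext_bidual (cqact (@dual_act gT (X -> ZG gT)))
                  (invar (@dual_act gT (X -> ZG gT)) (bidual_set act) H) s)
      (cqact (@bid_act gT ('I_s -> (X -> ZG gT))))
      (invar (@bid_act gT ('I_s -> (X -> ZG gT)))
             (ext_bidual act (fun _ => True) s) H)
      Phi
    /\
    (forall a : 'I_s -> X,
       Phi (xi (cqact (@dual_act gT (X -> ZG gT)))
               (invar (@dual_act gT (X -> ZG gT)) (bidual_set act) H)
               (fun i => evb act (normH act H (a i))))
       = (fun fs => gmul (NHel H) (xi act (fun _ => True) a fs))).
Proof.
move=> abG actD _ actM [gens gensP].
exists (@pullback gT X act H s); split; last exact: pullback_xi.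
split; [|split; [|split; [|split]]].
- exact: pullback_ext_bidual.
- by move=> F F' _ _; apply: pullbackD.
- by move=> c F _; apply: pullback_act.
- by move=> F F' extF extF'; apply: (pullback_inj abG gensP extF extF').
- move=> Psi extPsi; exists (@extension gT X act H s Psi).
    exact: extension_ext_bidual.
  exact: pullback_extension.
Qed.
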